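(* Consider the adoption–opinion model described in the context and suppose Assumption 1 (stated in the context) holds. If $s(0),a(0),d(0)\in[0,1]^n$ and $s(0)+a(0)+d(0)=\mathbf 1$, then $s(t),a(t),d(t)\in[0,1]^n$ and $s(t)+a(t)+d(t)=\mathbf 1$ for all $t\ge 0$. Moreover, if $x(0)\in[0,1]^n$, then $x(t)\in[0,1]^n$ for all $t\ge0$.
   Context: Let $n\ge1$ and $\mathcal V=\{1,\dots,n\}$ (communities). Let $W,\tilde W\in\mathbb R_+^{n\times n}$ be nonnegative matrices (physical and social interaction matrices). For each $i\in\mathcal V$ let $\beta_i,\gamma_i,\theta_i,\delta_i\in[0,1]$ and $\alpha_i,\lambda_i,\xi_i\ge0$ with $\alpha_i+\lambda_i+\xi_i=1$. The adoption–opinion model is the discrete-time system ($t\in\mathbb Z_+$), for all $i\in\mathcal V$: $s_i(t+1)=s_i(t)-\beta_i x_i(t)s_i(t)\sum_{j}W_{ij}a_j(t)+\gamma_i x_i(t)d_i(t)-\theta_i(1-x_i(t))s_i(t)$, $a_i(t+1)=a_i(t)+\beta_i x_i(t)s_i(t)\sum_{j}W_{ij}a_j(t)-\delta_i a_i(t)$, $d_i(t+1)=d_i(t)-\gamma_i x_i(t)d_i(t)+\theta_i(1-x_i(t))s_i(t)+\delta_i a_i(t)$, $x_i(t+1)=\alpha_i x_i(0)+\lambda_i\sum_j\tilde W_{ij}x_j(t)+\xi_i\sum_jW_{ij}a_j(t)$. Here $s_i,a_i,d_i$ are the fractions of susceptible, adopter and dissatisfied individuals in community $i$ and $x_i$ its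 opinion. Assumption 1: $W$ and $\tilde W$ are both row-stochastic and irreducible, and $\gamma_i+\theta_i\in(0,1)$ for all $i\in\mathcal V$. $\mathbf 1$ denotes the all-ones vector. *)

From mathcomp Require Import all_boot all_order all_algebra.
Set Implicit Arguments. Unset Strict Implicit. Unset Printing Implicit Defensive.
Import Order.TTheory GRing.Theory Num.Theory.
Local Open Scope ring_scope.

Definition nonneg_mx (R : numDomainType) n (W : 'M[R]_n) : Prop :=
  forall i j, 0 <= W i j.

Definition row_stochastic (R : numDomainType) n (W : 'M[R]_n) : Prop :=
  nonneg_mx W /\ forall i, \sum_j W i j = 1.

Definition irreducible_mx (R : numDomainType) n (W : 'M[R]_n) : Prop :=
  forall i j : 'I_n, connect (fun k l => 0 < W k l) i j.

Definition in01 (R : numDomainType) (v : R) : Prop := 0 <= v <= 1.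

Definition adoption_opinion_model (R : numDomainType) n
    (W Wt : 'M[R]_n) (beta gamma theta delta alpha lambda xi : 'I_n -> R)
    (s a d x : nat -> 'I_n -> R) : Prop :=
  forall (t : nat) (i : 'I_n),
    [/\ s t.+1 i = s t i - beta i * x t i * s t i * (\sum_j W i j * a t j)
                   + gamma i * x t i * d t i - theta i * (1 - x t i) * s t i,
        a t.+1 i = a t i + beta i * x t i * s t i * (\sum_j W i j * a t j)
                   - delta i * a t i,
        d t.+1 i = d t i - gamma i * x t i * d t i
                   + theta i * (1 - x t i) * s t i + delta i * a t i
      & x t.+1 i = alpha i * x 0%N i + lambda i * (\sum_j Wt i j * x t j)
                   + xi i * (\sum_j W i j * a t j)].

From mathcomp Require Import all_boot all_order all_algebra.
From mathcomp Require Import ring lra.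
Set Implicit Arguments. Unset Strict Implicit. Unset Printing Implicit Defensive.
Import Order.TTheory GRing.Theory Num.Theory.
Local Open Scope ring_scope.

(** Each
    compartment update rewrites as a nonnegative combination, e.g.
    s' = s (1 - b x y - th (1 - x)) + g x d, and the updates only move mass
    between compartments, so s + a + d is conserved.  The adoption pressure y
    and the new opinion are convex combinations of values in [0,1], because W
    and Wt are row-stochastic and alpha + lambda + xi = 1. *)

Lemma row_stochastic_sum_in01 (R : numDomainType) n (W : 'M[R]_n)
    (v : 'I_n -> R) i :
  row_stochastic W -> (forall j, in01 (v j)) -> in01 (\sum_j W i j * v j).
Proof.
move=> [W_ge0 W_sum1] v01; apply/andP; split.
  by apply: sumr_ge0 => j _; rewrite mulr_ge0 //; case/andP: (v01 j).
rewrite -(W_sum1 i); apply: ler_sum => j _.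
by rewrite ler_piMr //; case/andP: (v01 j).
Qed.

Lemma convex3_in01 (R : realDomainType) (p q r u v w : R) :
  0 <= p -> 0 <= q -> 0 <= r -> p + q + r = 1 ->
  in01 u -> in01 v -> in01 w -> in01 (p * u + q * v + r * w).
Proof.
move=> p0 q0 r0 pqr /andP[u0 u1] /andP[v0 v1] /andP[w0 w1].
apply/andP; split; first by rewrite !addr_ge0 ?mulr_ge0.
have pu : p * u <= p by rewrite ler_piMr.
have qv : q * v <= q by rewrite ler_piMr.
have rw : r * w <= r by rewrite ler_piMr.
lra.
Qed.

Lemma simplex3_in01 (R : realDomainType) (s a d : R) :
  0 <= s -> 0 <= a -> 0 <= d -> s + a + d = 1 ->
  [/\ in01 s, in01 a & in01 d].
Proof. by move=> *; split; apply/andP; split; lra. Qed.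

Section CompartmentUpdate.

Variables (R : realDomainType) (b g th de s a d x y : R).
Hypotheses (b01 : in01 b) (g01 : in01 g) (th01 : in01 th) (de01 : in01 de).
Hypotheses (s_ge0 : 0 <= s) (a_ge0 : 0 <= a) (d_ge0 : 0 <= d).
Hypotheses (x01 : in01 x) (y01 : in01 y).

Lemma susceptible_update_ge0 :
  0 <= s - b * x * s * y + g * x * d - th * (1 - x) * s.
Proof.
case/andP: b01 => b0 b1; case/andP: g01 => g0 g1; case/andP: th01 => t0 t1.
case/andP: x01 => x0 x1; case/andP: y01 => y0 y1.
have bxy : b * x * y <= x by rewrite mulrAC ler_piMl ?mulr_ile1.
have tx : th * (1 - x) <= 1 - x by rewrite ler_piMl // subr_ge0.
have -> : s - b * x * s * y + g * x * d - th * (1 - x) * s =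
    s * (1 - b * x * y - th * (1 - x)) + g * x * d by ring.
by rewrite addr_ge0 ?mulr_ge0 //; lra.
Qed.

Lemma adopter_update_ge0 : 0 <= a + b * x * s * y - de * a.
Proof.
case/andP: b01 => b0 _; case/andP: de01 => e0 e1.
case/andP: x01 => x0 _; case/andP: y01 => y0 _.
have -> : a + b * x * s * y - de * a = a * (1 - de) + b * x * s * y by ring.
by rewrite addr_ge0 ?mulr_ge0 ?subr_ge0.
Qed.

Lemma dissatisfied_update_ge0 :
  0 <= d - g * x * d + th * (1 - x) * s + de * a.
Proof.
case/andP: g01 => g0 g1; case/andP: th01 => t0 _; case/andP: de01 => e0 _.
case/andP: x01 => x0 x1.
have -> : d - g * x * d + th * (1 - x) * s + de * a =
    d * (1 - g * x) + th * (1 - x) * s + de * a by ring.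
by rewrite !addr_ge0 ?mulr_ge0 ?subr_ge0 ?mulr_ile1.
Qed.

End CompartmentUpdate.

Lemma compartment_update_sum (R : comPzRingType) (b g th de s a d x y : R) :
  (s - b * x * s * y + g * x * d - th * (1 - x) * s)
  + (a + b * x * s * y - de * a)
  + (d - g * x * d + th * (1 - x) * s + de * a) = s + a + d.
Proof. by ring. Qed.

Section ModelStep.

Variables (R : realDomainType) (n : nat) (W Wt : 'M[R]_n).
Variables (beta gamma theta delta alpha lambda xi : 'I_n -> R).
Variables (s a d x : nat -> 'I_n -> R).
Hypotheses (W_stoch : row_stochastic W) (Wt_stoch : row_stochastic Wt).
Hypothesis rates01 : forall i,
  [/\ in01 (beta i), in01 (gamma i), in01 (theta i) & in01 (delta i)].
Hypothesis weights_convex : forall i,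
  [/\ 0 <= alpha i, 0 <= lambda i, 0 <= xi i & alpha i + lambda i + xi i = 1].
Hypothesis model :
  adoption_opinion_model W Wt beta gamma theta delta alpha lambda xi s a d x.

Definition population_in_simplex t := forall i,
  [/\ in01 (s t i), in01 (a t i), in01 (d t i) & s t i + a t i + d t i = 1].

Definition opinion_in01 t := forall i, in01 (x t i).

Lemma population_step t :
  population_in_simplex t -> opinion_in01 t -> population_in_simplex t.+1.
Proof.
move=> pop_t op_t i.
have a01 j : in01 (a t j) by case: (pop_t j).
have y01 := row_stochastic_sum_in01 i W_stoch a01.
case: (model t i) => -> -> -> _.
case: (rates01 i) => b01 g01 th01 de01.
case: (pop_t i) => /andP[s0 _] /andP[a0 _] /andP[d0 _] sad1.
have := simplex3_in01 (susceptible_update_ge0 b01 g01 th01 s0 d0 (op_t i) y01)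
  (adopter_update_ge0 b01 de01 s0 a0 (op_t i) y01)
  (dissatisfied_update_ge0 g01 th01 de01 s0 a0 d0 (op_t i)).
rewrite compartment_update_sum sad1 => /(_ erefl)[s'01 a'01 d'01].
by split; rewrite // compartment_update_sum.
Qed.

Lemma opinion_step t :
  opinion_in01 0 -> population_in_simplex t -> opinion_in01 t -> opinion_in01 t.+1.
Proof.
move=> op_0 pop_t op_t i.
have a01 j : in01 (a t j) by case: (pop_t j).
case: (model t i) => _ _ _ ->.
case: (weights_convex i) => al0 la0 xi0 sum1.
by apply: (convex3_in01 al0 la0 xi0 sum1 (op_0 i));
  apply: row_stochastic_sum_in01.
Qed.

Lemma model_invariant t :
  population_in_simplex 0 -> opinion_in01 0 -> population_in_simplex t /\ opinion_in01 t.
Proof.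
move=> pop_0 op_0; elim: t => [|t [pop_t op_t]]; first by [].
by split; [apply: population_step | apply: opinion_step].
Qed.

End ModelStep.

Theorem proposition1 (R : realFieldType) (n : nat) (W Wt : 'M[R]_n)
  (beta gamma theta delta alpha lambda xi : 'I_n -> R)
  (s a d x : nat -> 'I_n -> R) :
  (0 < n)%N ->
  nonneg_mx W -> nonneg_mx Wt ->
  (forall i, [/\ in01 (beta i), in01 (gamma i), in01 (theta i) & in01 (delta i)]) ->
  (forall i, [/\ 0 <= alpha i, 0 <= lambda i, 0 <= xi i
                & alpha i + lambda i + xi i = 1]) ->
  (* Assumption 1 *)
  row_stochastic W -> row_stochastic Wt -> irreducible_mx W -> irreducible_mx Wt ->
  (forall i, 0 < gamma i + theta i < 1) ->
  adoption_opinion_model W Wt beta gamma theta delta alpha lambda xi s a d x ->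
  (forall i, [/\ in01 (s 0%N i), in01 (a 0%N i), in01 (d 0%N i)
                & s 0%N i + a 0%N i + d 0%N i = 1]) ->
  (forall i, in01 (x 0%N i)) ->
  (forall t i, [/\ in01 (s t i), in01 (a t i), in01 (d t i)
                  & s t i + a t i + d t i = 1])
  /\
  (forall t i, in01 (x t i)).
Proof.
(* Irreducibility and 0 < gamma + theta < 1 matter only for the asymptotics;
   nonnegativity of W and Wt is part of row-stochasticity. *)
move=> _ _ _ rates01 weights HW HWt _ _ _ model pop_0 op_0.
have inv t := model_invariant HW HWt rates01 weights model t pop_0 op_0.
by split=> t; case: (inv t).
Qed.
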